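(* Let $C\ge 2$ and let $w^*_{1},\dots,w^*_{C}\in\mathbb{R}^d/\mathbb{R}\mathbf{1}$ (one weight vector per class). Let $$\mathcal{B}=\{x\in\mathbb{R}^d/\mathbb{R}\mathbf{1}:\ d_{\rm tr}(x,-w^*_{j})=d_{\rm tr}(x,-w^*_{j'})\text{ for some } j\neq j'\}.$$ Then $\mathcal{B}$ contains no full-dimensional cell (i.e. has empty interior in $\mathbb{R}^d/\mathbb{R}\mathbf{1}\cong\mathbb{R}^{d-1}$) if and only if for all $i\neq j$ in $[C]$ the pair $w^*_i,w^*_j$ is in weak general position.
   Context: The tropical projective torus is $\mathbb{R}^d/\mathbb{R}\mathbf{1}$, $\mathbf{1}=(1,\dots,1)$, identified with $\mathbb{R}^{d-1}$ via $x\mapsto(x_2-x_1,\dots,x_d-x_1)$. Tropical metric: $d_{\rm tr}(x,y)=\max_{i}(x_i-y_i)-\min_i(x_i-y_i)$. A pair of points $p,q\in\mathbb{R}^d/\mathbb{R}\mathbf{1}$ is in weak general position (with respect to the tropical ball) if they do not lie in a common hyperplane parallel to a facet of a tropical ball $\{y:d_{\rm tr}(x,y)\le r\}$, i.e. $p_a-p_b\neq q_a-q_b$ for all $a\neq b$ in $[d]$. $[C]=\{1,\dots,C\}$. *)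

From HB Require Import structures.
From mathcomp Require Import all_boot all_order all_algebra.
From mathcomp Require Import all_classical all_reals all_analysis.
Set Implicit Arguments. Unset Strict Implicit. Unset Printing Implicit Defensive.
Import Order.TTheory GRing.Theory Num.Theory.
Import numFieldNormedType.Exports.
Local Open Scope classical_set_scope.
Local Open Scope ring_scope.

(* Points of R^d are row vectors 'rV[R]_d; points of the torus R^d/R1 are
   represented by any representative in R^d (all notions below are invariant
   under adding multiples of 1). *)

(* Tropical metric: max_i (x_i - y_i) - min_i (x_i - y_i), written as
   max_{i,j} ((x_i - y_i) - (x_j - y_j)) (equal to it, and 0 when d = 0). *)
Definition tdist (R : realType) (d : nat) (x y : 'rV[R]_d) : R :=
  \big[Num.max/0]_(i < d) \big[Num.max/0]_(j < d)
     ((x 0 i - y 0 i) - (x 0 j - y 0 j)).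

Definition weak_gen_pos (R : realType) (d : nat) (p q : 'rV[R]_d) : Prop :=
  forall a b : 'I_d, a != b -> p 0 a - p 0 b <> q 0 a - q 0 b.

(* Inverse of the identification R^d/R1 -> R^(d-1),
   x |-> (x_2 - x_1, ..., x_d - x_1): y |-> (0, y_1, ..., y_(d-1)). *)
Definition tlift (R : realType) (d : nat) (y : 'rV[R]_(d.-1)) : 'rV[R]_d :=
  \row_(i < d) match nat_of_ord i with
               | 0 => 0
               | k.+1 => odflt 0 (omap (fun j : 'I_(d.-1) => y 0 j) (insub k))
               end.

Definition bisector_set (R : realType) (d C : nat) (w : 'I_C -> 'rV[R]_d)
  : set 'rV[R]_(d.-1) :=
  [set y | exists j j' : 'I_C, j != j' /\
     tdist (tlift y) (- w j) = tdist (tlift y) (- w j')].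

From HB Require Import structures.
From mathcomp Require Import all_boot all_order all_algebra.
From mathcomp Require Import all_classical all_reals all_analysis.
From mathcomp Require Import zify ring lra.
Import Order.TTheory GRing.Theory Num.Theory.
Import numFieldNormedType.Exports.
Local Open Scope classical_set_scope.
Local Open Scope ring_scope.
Set Implicit Arguments. Unset Strict Implicit. Unset Printing Implicit Defensive.

(* The tropical distance from x to -w_c is the spread
   max_i (x_i + w_c,i) - min_i (x_i + w_c,i).
   If w_i and w_j violate weak general position at the coordinates p, q, then
   near any x whose p-th coordinate dominates and whose q-th coordinate is
   dominated by a margin larger than the weights, both spreads are attained at
   (p, q) and coincide, so B has interior.
   Conversely, move from any x along v = (2^0, ..., 2^(d-1)).  For small t > 0
   the spread at x + t v is affine in t, with slope v_k - v_l for the pair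
   (k, l) attaining the spread at x that maximises this slope.  Distinct
   differences of powers of two determine (k, l), so under weak general
   position the affine functions of two classes differ either at t = 0 or in
   slope; hence x + t v leaves B for small t, and B has empty interior. *)

Lemma expn2_sidon k l m n : k != l -> m != n ->
  (2 ^ k + 2 ^ n = 2 ^ m + 2 ^ l)%N -> k = m /\ l = n.
Proof.
wlog lk : k l m n / (l < k)%N.
  move=> H kl mn E; case: (ltngtP l k) => [lk | kl' | lk]; first exact: H.
    by have [] := H l k n m kl' _ _ _; rewrite 1?eq_sym //; lia.
  by rewrite lk eqxx in kl.
have sum_le a b c : (a < c -> b < c -> 2 ^ a + 2 ^ b <= 2 ^ c)%N.
  case: c => // c ac bc; rewrite expnS mul2n -addnn.
  by apply: leq_add; rewrite leq_exp2l // -ltnS.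
move=> _ mn E.
have lt2 a b : (a < b)%N -> (2 ^ a < 2 ^ b)%N by move=> ?; rewrite ltn_exp2l.
have nm : (n < m)%N.
  case: (ltngtP n m) => // [mn' | nm']; last by rewrite nm' eqxx in mn.
  by have := lt2 _ _ lk; have := lt2 _ _ mn'; lia.
have km : k = m.
  case: (ltngtP k m) => // [km | mk].
    by have := sum_le _ _ _ km nm; have := expn_gt0 2 l; lia.
  by have := sum_le _ _ _ mk lk; have := expn_gt0 2 n; lia.
by split => //; subst; apply: (@expnI 2) => //; lia.
Qed.

Section Spread.
Variable R : realDomainType.

Definition spread n (u : 'I_n -> R) : R :=
  \big[Num.max/0]_(i < n) \big[Num.max/0]_(j < n) (u i - u j).

Lemma spread_ge n (u : 'I_n -> R) i j : u i - u j <= spread u.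
Proof. exact: le_trans (le_bigmax _ _ j) (le_bigmax _ _ i). Qed.

Lemma spread_le n (u : 'I_n -> R) c :
  0 <= c -> (forall i j, u i - u j <= c) -> spread u <= c.
Proof.
move=> c0 uc; apply/bigmax_leP; split => // i _.
by apply/bigmax_leP; split => // j _; exact: uc.
Qed.

Lemma spread_max n (u : 'I_n -> R) k l :
  (forall i j, u i - u j <= u k - u l) -> spread u = u k - u l.
Proof.
move=> ukl; apply/le_anti; rewrite spread_ge andbT spread_le //.
by rewrite -(subrr (u k)) ukl.
Qed.

Lemma spread_max_min n (u : 'I_n -> R) a b :
  (forall k, u k <= u a) -> (forall k, u b <= u k) -> spread u = u a - u b.
Proof. by move=> ua ub; apply: spread_max => i j; apply: lerB. Qed.

Lemma spread_shift n (u : 'I_n -> R) c : spread (fun i => u i + c) = spread u.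
Proof. by apply: eq_bigr => i _; apply: eq_bigr => j _; rewrite opprD addrACA subrr addr0. Qed.

Lemma spread_dominant n (x W : 'I_n -> R) K p q :
  (forall k, `|W k| <= K) ->
  (forall k, k != p -> x k + 2 * K <= x p) ->
  (forall k, k != q -> x q + 2 * K <= x k) ->
  spread (fun i => x i + W i) = (x p + W p) - (x q + W q).
Proof.
move=> WK xp xq; apply: spread_max_min => k.
  have [-> // | kp] := eqVneq k p.
  by have := xp k kp; move: (WK k) (WK p); rewrite !ler_norml; lra.
have [-> // | kq] := eqVneq k q.
by have := xq k kq; move: (WK k) (WK q); rewrite !ler_norml; lra.
Qed.

End Spread.

Section Perturbation.
Variable R : realFieldType.

Definition sidon (I : eqType) (v : I -> R) :=
  forall k l k' l', k != l -> k' != l' -> v k - v l = v k' - v l' -> k = k' /\ l = l'.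

Lemma sidon_inj (I : eqType) (v : I -> R) : sidon v -> injective v.
Proof.
move=> sv k l vkl; apply/eqP/negPn/negP => kl.
have := sv k l l k kl; rewrite eq_sym kl vkl => /(_ isT erefl)[kl_eq _].
by rewrite kl_eq eqxx in kl.
Qed.

Lemma sidon_pow2 n : sidon (fun i : 'I_n => (2 ^ i)%:R : R).
Proof.
move=> k l k' l' kl kl' E.
suff [? ?] : k = k' :> nat /\ l = l' :> nat by split; apply: val_inj.
apply: expn2_sidon => //.
by apply/eqP; rewrite -(eqr_nat R) !natrD; apply/eqP; lra.
Qed.

Lemma lexmax_dominates (I : finType) (a b : I -> R) k :
  (forall i, a i <= a k) -> (forall i, a i = a k -> b i <= b k) ->
  \forall t \near 0^'+, forall i, a i + t * b i <= a k + t * b k.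
Proof.
move=> amax bmax; apply: filter_forall => i.
have [aik | aik] := eqVneq (a i) (a k).
  near=> t; have t0 : 0 < t by near: t; exact: nbhs_right_gt.
  by rewrite aik lerD2l; apply: ler_wpM2l; [exact: ltW | exact: bmax].
have gap : 0 < (a k - a i) / (`|b i - b k| + 1).
  by rewrite divr_gt0 // ?subr_gt0 ?lt_neqAle ?aik ?amax //; lra.
near=> t.
have t0 : 0 < t by near: t; exact: nbhs_right_gt.
have : t < (a k - a i) / (`|b i - b k| + 1) by near: t; exact: nbhs_right_lt.
rewrite ltr_pdivlMr; last by have := normr_ge0 (b i - b k); lra.
have := ler_norm (b i - b k); nra.
Unshelve. all: by end_near.
Qed.

Lemma spread_perturb n (u v : 'I_n.+2 -> R) : sidon v -> exists k l,
  [/\ k != l, spread u = u k - u l &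
      \forall t \near 0^'+,
        spread (fun i => u i + t * v i) = spread u + t * (v k - v l)].
Proof.
move=> sv.
pose a (p : 'I_n.+2 * 'I_n.+2) := u p.1 - u p.2.
pose b (p : 'I_n.+2 * 'I_n.+2) := v p.1 - v p.2.
have [p0 _ p0max] := @arg_maxP _ _ _ (ord0, ord0) predT a isT.
have [q /eqP aq qmax] := @arg_maxP _ _ _ p0 (fun p => a p == a p0) b (eqxx _).
have amax p : a p <= a q by rewrite aq; exact: p0max.
have spread_u : spread u = a q by apply: spread_max => i j; exact: (amax (i, j)).
exists q.1, q.2; split => //.
- apply/negP => /eqP q12.
  have aq0 : a q = 0 by rewrite /a q12 subrr.
  have amax0 p : a p = a p0.
    rewrite -aq aq0; apply/le_anti; rewrite -{1}aq0 amax /=.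
    by have := amax (p.2, p.1); rewrite aq0 /a /=; lra.
  have bmax0 p : b p <= 0.
    by have := qmax p (introT eqP (amax0 p)); rewrite /b q12 subrr.
  have v01 : v ord0 = v (lift ord0 ord0).
    by apply/le_anti/andP; split; rewrite -subr_le0; exact: (bmax0 (_, _)).
  by have /eqP := sidon_inj sv v01; rewrite -val_eqE.
- have bmax p : a p = a q -> b p <= b q by move=> apq; apply: qmax; rewrite apq aq.
  have dom := lexmax_dominates amax bmax.
  near=> t.
  have tdom : forall p, a p + t * b p <= a q + t * b q by near: t; exact: dom.
  rewrite spread_u (spread_max (k := q.1) (l := q.2)) => [|i j].
    by rewrite /a; ring.
  by have := tdom (i, j); rewrite /a /b /=; lra.
Unshelve. all: by end_near.
Qed.

Lemma affine_neq0_near (a b : R) : (a != 0) || (b != 0) ->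
  \forall t \near 0^'+, a + t * b != 0.
Proof.
have [a0 | a0] := eqVneq a 0 => /= [b0 | _].
  near=> t; have t0 : 0 < t by near: t; exact: nbhs_right_gt.
  by rewrite a0 add0r mulf_neq0 // gt_eqF.
have b1 : 0 < `|b| + 1 by have := normr_ge0 b; lra.
have bound : 0 < `|a| / (`|b| + 1) by rewrite divr_gt0 ?normr_gt0.
near=> t; have t0 : 0 < t by near: t; exact: nbhs_right_gt.
have : t < `|a| / (`|b| + 1) by near: t; exact: nbhs_right_lt.
rewrite ltr_pdivlMr // => ta; apply/negP; rewrite addr_eq0 => /eqP aE.
by move: ta; rewrite aE normrN normrM gtr0_norm //; nra.
Unshelve. all: by end_near.
Qed.

Lemma spread_perturb_separates n (u u' v : 'I_n.+2 -> R) : sidon v ->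
  (forall a b, a != b -> u a - u b <> u' a - u' b) ->
  \forall t \near 0^'+,
    spread (fun i => u i + t * v i) != spread (fun i => u' i + t * v i).
Proof.
move=> sv uu'.
have [k [l [kl su ev]]] := spread_perturb u sv.
have [k' [l' [kl' su' ev']]] := spread_perturb u' sv.
have ab : (spread u - spread u' != 0) || (v k - v l - (v k' - v l') != 0).
  rewrite -negb_and; apply/negP => /andP[/eqP a0 /eqP b0].
  have [ek el] : k = k' /\ l = l' by apply: sv => //; lra.
  by subst k' l'; apply: (uu' k l kl); lra.
have ne := affine_neq0_near ab.
near=> t.
have -> : spread (fun i => u i + t * v i) = spread u + t * (v k - v l).
  by near: t; exact: ev.
have -> : spread (fun i => u' i + t * v i) = spread u' + t * (v k' - v l').
  by near: t; exact: ev'.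
have : spread u - spread u' + t * (v k - v l - (v k' - v l')) != 0.
  by near: t; exact: ne.
by apply: contra => /eqP E; apply/eqP; lra.
Unshelve. all: by end_near.
Qed.

End Perturbation.

Section TorusCoordinates.
Variables (R : realType) (n : nat).

Definition tproj (x : 'rV[R]_n.+2) : 'rV[R]_n.+1 :=
  \row_j (x 0 (lift ord0 j) - x 0 ord0).

Lemma tliftE (y : 'rV[R]_n.+1) i :
  tlift (d := n.+2) y 0 i = if unlift ord0 i is Some j then y 0 j else 0.
Proof.
rewrite /tlift mxE; case: unliftP => [j -> | ->] //=.
case: insubP => [j' _ /val_inj -> // |].
by rewrite ltn_ord.
Qed.

Lemma tlift_lin (y z : 'rV[R]_n.+1) t i :
  tlift (d := n.+2) (y + t *: z) 0 i =
  tlift (d := n.+2) y 0 i + t * tlift (d := n.+2) z 0 i.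
Proof. by rewrite !tliftE; case: unlift => [j|]; rewrite ?mxE // mulr0 addr0. Qed.

Lemma tlift_tproj x i : tlift (d := n.+2) (tproj x) 0 i = x 0 i - x 0 ord0.
Proof.
by rewrite tliftE; case: unliftP => [j -> | ->]; rewrite ?mxE ?subrr.
Qed.

Lemma tdist_spread d (x W : 'rV[R]_d) :
  tdist x (- W) = spread (fun i => x 0 i + W 0 i).
Proof. by apply: eq_bigr => i _; apply: eq_bigr => j _; rewrite !mxE !opprK. Qed.

Lemma tlift_ball (y z : 'rV[R]_n.+1) e i : ball y e z ->
  `|tlift (d := n.+2) y 0 i - tlift (d := n.+2) z 0 i| < e.
Proof.
case=> e0 yz; rewrite !tliftE; case: unlift => [j|]; last by rewrite subrr normr0.
by have := yz 0 j; rewrite -ball_normE.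
Qed.

End TorusCoordinates.

Lemma bisector_interior_degenerate (R : realType) n C (w : 'I_C -> 'rV[R]_n.+2)
    i j p q :
  i != j -> p != q -> w i 0 p - w i 0 q = w j 0 p - w j 0 q ->
  exists y, interior (bisector_set w) y.
Proof.
move=> ij pq E.
pose K := \big[Num.max/0]_(ck : 'I_C * 'I_n.+2) `|w ck.1 0 ck.2|.
have wK c k : `|w c 0 k| <= K by exact: (le_bigmax _ _ (c, k)).
have K0 : 0 <= K by exact: le_trans (wK i p).
pose M := 2 * K + 2.
pose x0 : 'rV[R]_n.+2 := \row_k (M * ((k == p)%:R - (k == q)%:R)).
have x0p : x0 0 p = M by rewrite mxE eqxx (negbTE pq) subr0 mulr1.
have x0q : x0 0 q = - M by rewrite mxE eq_sym (negbTE pq) eqxx sub0r mulrN1.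
have x0_le k : k != p -> x0 0 k <= 0.
  by move=> kp; rewrite mxE (negbTE kp) sub0r mulrN oppr_le0 mulr_ge0 ?ler0n // /M; lra.
have x0_ge k : k != q -> 0 <= x0 0 k.
  by move=> kq; rewrite mxE (negbTE kq) subr0 mulr_ge0 ?ler0n // /M; lra.
exists (tproj x0); apply/nbhs_ballP; exists 1 => [|z /tlift_ball near_x0]; first exact: ltr01.
have {}near_x0 k : `|x0 0 k - x0 0 ord0 - tlift (d := n.+2) z 0 k| < 1.
  by rewrite -tlift_tproj; exact: near_x0.
have dom c : tdist (tlift z) (- w c) =
    (tlift (d := n.+2) z 0 p + w c 0 p) - (tlift (d := n.+2) z 0 q + w c 0 q).
  rewrite tdist_spread; apply: spread_dominant => [k | k kp | k kq]; first exact: wK.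
    have := x0_le k kp; move: (near_x0 k) (near_x0 p); rewrite x0p /M !ltr_norml; lra.
  have := x0_ge k kq; move: (near_x0 k) (near_x0 q); rewrite x0q /M !ltr_norml; lra.
by exists i, j; split => //; rewrite !dom; lra.
Qed.

Lemma bisector_interior_empty (R : realType) n C (w : 'I_C -> 'rV[R]_n.+2) :
  (forall i j, i != j -> weak_gen_pos (w i) (w j)) ->
  interior (bisector_set w) = set0.
Proof.
move=> wgp; apply/seteqP; split => // y0 y0B.
pose v (i : 'I_n.+2) : R := (2 ^ i)%:R.
pose z := tproj (\row_i v i).
have zE i : tlift (d := n.+2) z 0 i = v i - v ord0 by rewrite tlift_tproj !mxE.
pose u c i := tlift (d := n.+2) y0 0 i + w c 0 i.
have nearB : \forall t \near 0^'+, bisector_set w (y0 + t *: z).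
  have to_y0 : (fun t => y0 + t *: z) @ 0^'+ --> y0.
    apply: cvg_at_right_filter; rewrite -[X in _ --> X]addr0 -(scale0r z).
    by apply: cvgD; [exact: cvg_cst | apply: cvgZ; [exact: cvg_id | exact: cvg_cst]].
  exact: (to_y0 _ y0B).
have sep : \forall t \near 0^'+, forall c c', c != c' ->
    spread (fun i => u c i + t * v i) != spread (fun i => u c' i + t * v i).
  apply: filter_forall => c; apply: filter_forall => c'.
  have [<- | cc'] := eqVneq c c'; first by apply: nearW => t; rewrite eqxx.
  have sep_cc' : \forall t \near 0^'+,
      spread (fun i => u c i + t * v i) != spread (fun i => u c' i + t * v i).
    apply: spread_perturb_separates; first exact: sidon_pow2.
    by move=> a b ab; rewrite /u => E; apply: (wgp c c' cc' a b ab); lra.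
  by move: sep_cc'; apply: filterS => t ne _.
have [t [[c [c' [cc' E]]] /(_ c c' cc')]] := filter_ex (filterI nearB sep).
suff shift c0 : tdist (tlift (y0 + t *: z)) (- w c0) =
    spread (fun i => u c0 i + t * v i) by rewrite -!shift E eqxx.
rewrite tdist_spread -(spread_shift (fun i => u c0 i + t * v i) (- (t * v ord0))).
congr spread.
by apply: funext => i; rewrite tlift_lin zE /u; ring.
Qed.

Unset Implicit Arguments.

Theorem mainTheorem3 (R : realType) (d C : nat) (hd : (2 <= d)%N)
  (hC : (2 <= C)%N) (w : 'I_C -> 'rV[R]_d) :
  interior (bisector_set w) = set0 <->
  (forall i j : 'I_C, i != j -> weak_gen_pos (w i) (w j)).
Proof.
case: d hd w => [|[|n]] // _ w; split => [emptyB i j ij p q pq E | wgp].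
  by have [y] := bisector_interior_degenerate ij pq E; rewrite emptyB.
exact: bisector_interior_empty.
Qed.
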